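(* Let $a,b$ be positive integers and let $d=\gcd(a,b)$. If $a$ divides $b$ or $b$ divides $a$, then $\Gamma(a,b)=1$. Otherwise: (1) if $a/d$ is odd, then $\Gamma(a,b)=1$ if and only if $\Theta(b,a)$ is odd; (2) if $a/d$ is even, then $\Gamma(a,b)=1$ if and only if $\Theta(a,b)$ is odd.
   Context: For relatively prime positive integers $p,q$, exactly one of the equations $px+qy=\frac{(p-1)(q-1)}{2}$ (Equation 1) and $px+qy+1=\frac{(p-1)(q-1)}{2}$ (Equation 2) has a solution in nonnegative integers $(x,y)$. For positive integers $a,b$ with $d=\gcd(a,b)$, $\Gamma(a,b)=1$ if Equation 1 with $(p,q)=(a/d,b/d)$ has a nonnegative integer solution, and $\Gamma(a,b)=2$ otherwise. For positive integers $a,b$ with $d=\gcd(a,b)$ and $b/d>1$, $\Theta(a,b)$ denotes the unique integer with $0<\Theta(a,b)<b/d$ and $(a/d)\Theta(a,b)\equiv 1 \pmod{b/d}$. *)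

From mathcomp Require Import all_boot.
Set Implicit Arguments. Unset Strict Implicit. Unset Printing Implicit Defensive.

(* Right-hand side (p-1)(q-1)/2 of Equation 1; for coprime p,q one of them
   is odd, so (p-1)(q-1) is even and nat division by 2 is exact. *)
Definition rhs (p q : nat) : nat := ((p - 1) * (q - 1)) %/ 2.

(* Equation 1 p x + q y = (p-1)(q-1)/2 has a solution in nonnegative integers.
   Any solution has x, y <= rhs p q (since p, q >= 1), so the search is
   exhaustive. *)
Definition eq1_solvable (p q : nat) : bool :=
  has (fun x => has (fun y => p * x + q * y == rhs p q) (iota 0 (rhs p q).+1))
      (iota 0 (rhs p q).+1).

Definition Gamma (a b : nat) : nat :=
  let d := gcdn a b in
  if eq1_solvable (a %/ d) (b %/ d) then 1 else 2.

(* Theta a b: the unique t with 0 < t < b/d and (a/d) t = 1 mod (b/d),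
   meaningful when b/d > 1 (computed as the first such t). *)
Definition Theta (a b : nat) : nat :=
  let d := gcdn a b in
  head 0 [seq t <- iota 1 (b %/ d).-1 | (a %/ d) * t == 1 %[mod b %/ d]].

From mathcomp Require Import all_boot.
From mathcomp Require Import zify.

Set Implicit Arguments.
Unset Strict Implicit.
Unset Printing Implicit Defensive.

(* Doubling and adding one turns p x + q y = (p-1)(q-1)/2, for q odd, into
   p u + q v = p q + 1 with u and v odd.  Such a u is smaller than q and
   inverts p modulo q, so it is the inverse Θ; conversely, when Θ is odd,
   writing p Θ = k q + 1 the cofactor v = p - k is odd too.  Of p and q,
   coprimality makes at least one odd, and it plays the role of q. *)

Lemma eq1_solvableP p q : 0 < p -> 0 < q ->
  reflect (exists x y, p * x + q * y = rhs p q) (eq1_solvable p q).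
Proof.
move=> p_gt0 q_gt0; apply: (iffP hasP) => [[x _ /hasP [y _ /eqP e]]|[x [y e]]].
  by exists x, y.
exists x; first by rewrite mem_iota; nia.
by apply/hasP; exists y; rewrite ?mem_iota ?e //; nia.
Qed.

Lemma eq1_solvableC p q : 0 < p -> 0 < q -> eq1_solvable p q = eq1_solvable q p.
Proof.
move=> p_gt0 q_gt0.
apply/(eq1_solvableP p_gt0 q_gt0)/(eq1_solvableP q_gt0 p_gt0);
  by case=> x [y e]; exists y, x; rewrite addnC e /rhs mulnC.
Qed.

Lemma eq1_solvable1n q : eq1_solvable 1 q.
Proof. by rewrite /eq1_solvable /rhs subnn /= !(mul0n, muln0). Qed.

Lemma eq1_solvablen1 p : eq1_solvable p 1.
Proof. by rewrite /eq1_solvable /rhs subnn /= !muln0. Qed.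

Lemma rhs_double p q : odd q -> 2 * rhs p q = (p - 1) * (q - 1).
Proof.
move=> q_odd; rewrite /rhs -[q]odd_double_half q_odd add1n subSS subn0.
by rewrite -mul2n mulnCA mulKn.
Qed.

Lemma eq1_solvable_odd p q : 0 < p -> 0 < q -> odd q ->
  reflect (exists u v, [/\ odd u, odd v & p * u + q * v = p * q + 1])
          (eq1_solvable p q).
Proof.
move=> p_gt0 q_gt0 q_odd.
have shift : 2 * rhs p q + p + q = p * q + 1.
  by rewrite rhs_double // -(prednK p_gt0) -(prednK q_gt0) !subn1 /=; nia.
apply: (iffP (eq1_solvableP p_gt0 q_gt0)) => [[x [y e]]|[u [v [u_odd v_odd e]]]].
  exists (2 * x + 1), (2 * y + 1); split; [by rewrite addn1 /= oddM.. |].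
  by rewrite -shift -e; nia.
move: e; rewrite -shift -[u]odd_double_half -[v]odd_double_half u_odd v_odd => e.
by exists u./2, v./2; nia.
Qed.

Lemma solution_modn_inverse p q u v : 1 < q -> 0 < v -> p * u + q * v = p * q + 1 ->
  u < q /\ p * u = 1 %[mod q].
Proof.
move=> q_gt1 v_gt0 e; split; last by rewrite -(modnMDl v) mulnC addnC e modnMDl.
rewrite ltnNge; apply/negP => le_qu.
have : p * q + q <= p * u + q * v by rewrite leq_add ?leq_mul2l ?le_qu ?orbT ?leq_pmulr.
by rewrite e; lia.
Qed.

Lemma odd_inverse_solution p q t : 1 < q -> odd q -> odd t -> t < q ->
  p * t = 1 %[mod q] -> exists v, odd v /\ p * t + q * v = p * q + 1.
Proof.
move=> q_gt1 q_odd t_odd t_lt_q inv.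
have e : p * t = (p * t %/ q) * q + 1 by rewrite {1}(divn_eq (p * t) q) inv modn_small.
set k := p * t %/ q in e.
have k_lt_p : k < p.
  rewrite -(ltn_pmul2r (ltnW q_gt1)) (@leq_trans (p * t)) ?leq_mul2l ?(ltnW t_lt_q) ?orbT //.
  by rewrite e addn1.
exists (p - k); split.
  rewrite oddB ?(ltnW k_lt_p) //; move/(congr1 odd): e.
  by rewrite addn1 /= !oddM t_odd q_odd !andbT => ->; case: (odd k).
have : q * k <= q * p by rewrite leq_mul2l ltnW ?orbT.
by rewrite e mulnBr; lia.
Qed.

Lemma mul_modn_inj p q u t : coprime p q -> u < q -> t < q ->
  p * u = p * t %[mod q] -> u = t.
Proof.
wlog le_tu : u t / t <= u => [hwlog cop u_lt t_lt e|cop u_lt _ /eqP].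
  by case: (leqP t u) => [le|/ltnW le]; [|symmetry]; apply: hwlog.
rewrite eqn_mod_dvd ?leq_mul2l ?le_tu ?orbT // -mulnBr Gauss_dvdr 1?coprime_sym //.
case: (posnP (u - t)) => [|pos]; first lia.
by rewrite gtnNdvd //; lia.
Qed.

Lemma eq1_solvable_inverse p q t : 0 < p -> 1 < q -> odd q -> coprime p q ->
  t < q -> p * t = 1 %[mod q] -> eq1_solvable p q = odd t.
Proof.
move=> p_gt0 q_gt1 q_odd cop t_lt inv.
apply/(eq1_solvable_odd p_gt0 (ltnW q_gt1) q_odd)/idP.
  case=> u [v [u_odd /odd_gt0 v_gt0 e]].
  have [u_lt inv_u] := solution_modn_inverse q_gt1 v_gt0 e.
  by rewrite -(mul_modn_inj cop u_lt t_lt) // inv_u inv.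
move=> t_odd; have [v [v_odd e]] := odd_inverse_solution q_gt1 q_odd t_odd t_lt inv.
by exists t, v.
Qed.

Lemma modn_inverse p q : coprime p q -> exists t, p * t = 1 %[mod q].
Proof.
case: (posnP p) => [->|p_gt0 cop]; first by rewrite /coprime gcd0n => /eqP ->; exists 0.
have [km kn e _] := egcdnP q p_gt0; exists km.
by rewrite mulnC e (eqP cop) modnMDl.
Qed.

Lemma coprime_divn_gcd a b : 0 < gcdn a b ->
  coprime (a %/ gcdn a b) (b %/ gcdn a b).
Proof.
move=> g_gt0; rewrite /coprime -(eqn_pmul2r g_gt0) muln_gcdl.
by rewrite !divnK ?dvdn_gcdl ?dvdn_gcdr // mul1n.
Qed.

Lemma divn_gcd_eq1 a b : 0 < a -> (a %/ gcdn a b == 1) = (a %| b).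
Proof.
move=> a_gt0; apply/eqP/idP => [h|/gcdn_idPl ->]; last by rewrite divnn a_gt0.
by rewrite -(divnK (dvdn_gcdl a b)) h mul1n dvdn_gcdr.
Qed.

Lemma ThetaP a b : 1 < b %/ gcdn a b ->
  Theta a b < b %/ gcdn a b /\ a %/ gcdn a b * Theta a b = 1 %[mod b %/ gcdn a b].
Proof.
rewrite /Theta; set q := b %/ _ => q_gt1.
have q_gt0 := ltnW q_gt1.
have g_gt0 : 0 < gcdn a b by case: (posnP (gcdn a b)) q_gt1 => // g0; rewrite /q g0.
have [t0 inv] := modn_inverse (coprime_divn_gcd g_gt0).
set s := [seq t <- _ | _].
have t_in_s : t0 %% q \in s.
  rewrite mem_filter mem_iota modnMmr inv eqxx add1n prednK // ltn_pmod // andbT.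
  rewrite lt0n; apply/eqP => t0_mod; move: inv.
  by rewrite -modnMmr t0_mod muln0 mod0n modn_small.
have : head 0 s \in s.
  by rewrite -nth0 mem_nth // lt0n size_eq0; apply: contraTneq t_in_s => ->.
by rewrite mem_filter mem_iota => /andP [/eqP -> /andP [_ lt]]; split => //; lia.
Qed.

Lemma Gamma_eq1 a b : Gamma a b = 1 <-> eq1_solvable (a %/ gcdn a b) (b %/ gcdn a b).
Proof. by rewrite /Gamma /=; case: eq1_solvable. Qed.

Theorem theorem1p1 (a b : nat) (ha : 0 < a) (hb : 0 < b) :
  let d := gcdn a b in
  ((a %| b) || (b %| a) -> Gamma a b = 1) /\
  (~~ (a %| b) -> ~~ (b %| a) ->
     (odd (a %/ d) -> (Gamma a b = 1 <-> odd (Theta b a))) /\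
     (~~ odd (a %/ d) -> (Gamma a b = 1 <-> odd (Theta a b)))).
Proof.
move=> d; have d_gt0 : 0 < d by rewrite gcdn_gt0 ha.
have p_gt0 : 0 < a %/ d by rewrite divn_gt0 // dvdn_leq // dvdn_gcdl.
have q_gt0 : 0 < b %/ d by rewrite divn_gt0 // dvdn_leq // dvdn_gcdr.
have cop : coprime (a %/ d) (b %/ d) := coprime_divn_gcd d_gt0.
have inv_ab := @ThetaP a b; have inv_ba := @ThetaP b a.
rewrite -/d in inv_ab; rewrite gcdnC -/d in inv_ba.
rewrite Gamma_eq1 -(divn_gcd_eq1 b ha) -(divn_gcd_eq1 a hb) (gcdnC b a) -/d.
split; first by case/orP => /eqP ->; rewrite ?eq1_solvable1n ?eq1_solvablen1.
move=> p_neq1 q_neq1; have [p_gt1 q_gt1] : 1 < a %/ d /\ 1 < b %/ d by lia.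
split => [p_odd|p_even].
  have [lt inv] := inv_ba p_gt1; rewrite coprime_sym in cop.
  by rewrite eq1_solvableC // (eq1_solvable_inverse q_gt0 p_gt1 p_odd cop lt inv).
have q_odd : odd (b %/ d) by rewrite -coprime2n (coprime_dvdl _ cop) // dvdn2.
have [lt inv] := inv_ab q_gt1.
by rewrite (eq1_solvable_inverse p_gt0 q_gt1 q_odd cop lt inv).
Qed.
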